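(* Let $F$ be a tract and let $J\subseteq\Delta^r_n$ be an M-convex set that is not of the form $J'+\tau$ with $J'\subseteq\{0,1\}^n$ M-convex and $\tau\in\mathbb Z^n$. If there exists a weak $F$-representation of $J$, then $F$ is near-idempotent. If moreover $\delta^+_{J,i}-\delta^-_{J,i}\ge3$ for some $i\in[n]$, then $F$ is idempotent.
   Context: A tract is a commutative monoid $F$ (written multiplicatively) with an absorbing element $0$ such that $F^\times=F\setminus\{0\}$ is an abelian group, together with a subset $N_F$ of the group semiring $F^+=\mathbb N[F^\times]$ (finite formal sums of elements of $F^\times$; $0$ is the empty sum) which contains $0$, is closed under addition and under multiplication by elements of $F^+$, and such that for every $a\in F$ there is a unique $b\in F$ with $a+b\in N_F$; this $b$ is denoted $-a$. $F$ is idempotent if $1+1\in N_F$ and $1+1+1\in N_F$; near-idempotent if $1+1\in N_F$ (i.e. $-1=1$) and $1+1+x\in N_F$ for some $x\in F^\times$. $\Delta^r_n=\{\alpha\in\mathbb N^n:\sum\alpha_i=r\}$; M-convex: nonempty $J$ such that for $\alpha,\beta\in J$ and $i$ with $\alpha_i<\beta_i$ there is $j$ with $\alpha_j>\beta_j$ and $\alpha+\epsilon_i-\epsilon_j,\beta-\epsilon_i+\epsilon_j\in J$. $\delta^\mp_J$ are the componentwise min/max of $J$; $\bar J=J-\delta^-_J$; $\bar r=r-\sum_i\delta^-_{J,i}$; $\omega_J=\delta^+_J-\delta^-_J$. For $\boldsymbol\beta\in[n]^m$ let $\Sigma\boldsymbol\beta=\epsilon_{\beta_1}+\dots+\epsilon_{\beta_m}$;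 juxtaposition $\boldsymbol\alpha ij$ denotes concatenation of tuples. A weak $F$-representation of $J$ is a function $\rho\colon[n]^{\bar r}\to F$ such that (i) $\rho(\boldsymbol\beta)\ne0$ iff $\Sigma\boldsymbol\beta\in\bar J$; (ii) $\rho(\beta_{\sigma(1)},\dots,\beta_{\sigma(\bar r)})=\mathrm{sign}(\sigma)\rho(\beta_1,\dots,\beta_{\bar r})$ for all $\sigma\in S_{\bar r}$; (iii) $\rho(\boldsymbol\alpha jk)\rho(\boldsymbol\alpha il)-\rho(\boldsymbol\alpha ik)\rho(\boldsymbol\alpha jl)+\rho(\boldsymbol\alpha ij)\rho(\boldsymbol\alpha kl)\in N_F$ for all $\boldsymbol\alpha\in[n]^{\bar r-2}$ and $i,j,k,l\in[n]$ with $\Sigma(\boldsymbol\alpha ijkl)\le\omega_J$. *)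

From Stdlib Require Import Permutation.
From HB Require Import structures.
From mathcomp Require Import all_boot all_order all_algebra all_fingroup.
From mathcomp Require Import finmap.
Set Implicit Arguments. Unset Strict Implicit. Unset Printing Implicit Defensive.

(* An element of F^+ = N[F^x] (a finite formal sum of nonzero elements) *)
(* is represented by a list [:: a1; ...; ak] of elements of F standing  *)
(* for a1 + ... + ak; the order of the list is irrelevant and entries  *)
(* equal to 0 are dropped (0 is the empty sum).  N_F is a predicate on *)
(* such lists that respects this representation (axioms tN_perm and    *)
(* tN_zero).                                                           *)
Record tract := Tract {
  tcar :> Type;
  tzero : tcar;
  tone : tcar;
  tmul : tcar -> tcar -> tcar;
  tmulA : forall x y z, tmul x (tmul y z) = tmul (tmul x y) z;
  tmulC : forall x y, tmul x y = tmul y x;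
  tmul1 : forall x, tmul tone x = x;
  tmul0 : forall x, tmul tzero x = tzero;
  tone_neq0 : tone <> tzero;
  tmulV : forall x, x <> tzero -> exists y, tmul y x = tone;
  tN : seq tcar -> Prop;
  tN_perm : forall s t, Permutation s t -> tN s -> tN t;
  tN_zero : forall s, tN (tzero :: s) <-> tN s;
  tN_nil : tN [::];
  tN_add : forall s t, tN s -> tN t -> tN (s ++ t);
  tN_mul : forall t s, tN s ->
     tN (flatten [seq [seq tmul a b | b <- s] | a <- t]);
  tneg : tcar -> tcar;
  tN_neg : forall a, tN [:: a; tneg a];
  tneg_uniq : forall a b, tN [:: a; b] -> b = tneg a
}.

Definition tract_idempotent (F : tract) : Prop :=
  tN [:: tone F; tone F] /\ tN [:: tone F; tone F; tone F].

Definition tract_near_idempotent (F : tract) : Prop :=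
  tN [:: tone F; tone F] /\
  exists x : F, x <> tzero F /\ tN [:: tone F; tone F; x].

Definition in_Delta (n r : nat) (a : nat ^ n) : bool := \sum_(i < n) a i == r.

Definition addeps n (a : nat ^ n) (i j : 'I_n) : nat ^ n :=
  [ffun k => a k + (k == i) - (k == j)].

Definition Mconvex n (J : {fset nat ^ n}) : Prop :=
  J != fset0 /\
  forall a b, a \in J -> b \in J -> forall i : 'I_n, a i < b i ->
    exists j : 'I_n, [/\ b j < a j, addeps a i j \in J & addeps b j i \in J].

Definition dplus n (J : {fset nat ^ n}) (i : 'I_n) : nat :=
  \max_(a <- J) a i.
Definition dminus n (J : {fset nat ^ n}) (i : 'I_n) : nat :=
  \big[minn/dplus J i]_(a <- J) a i.
Definition omega n (J : {fset nat ^ n}) (i : 'I_n) : nat := dplus J i - dminus J i.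
Definition rbar n (r : nat) (J : {fset nat ^ n}) : nat := r - \sum_(i < n) dminus J i.
Definition in_Jbar n (J : {fset nat ^ n}) (g : nat ^ n) : bool :=
  [ffun i => g i + dminus J i] \in J.

Definition sumvec n (s : seq 'I_n) : nat ^ n := [ffun i => count_mem i s].

Definition le_vec n (a b : nat ^ n) : bool := [forall i, a i <= b i].

Definition tsign (F : tract) (b : bool) : F := if b then tneg (tone F) else tone F.

(* Weak F-representation of J; rho is a function on words over [n];  *)
(* only its values on words of length rbar matter.                    *)
Definition weak_rep (F : tract) n (r : nat) (J : {fset nat ^ n})
    (rho : seq 'I_n -> F) : Prop :=
  let m := rbar r J in
  (forall b : m.-tuple 'I_n, rho b <> tzero F <-> in_Jbar J (sumvec b)) /\
  (forall (b : m.-tuple 'I_n) (s : 'S_m),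
      rho [seq tnth b (s k) | k <- enum 'I_m] = tmul (tsign F (odd_perm s)) (rho b)) /\
  (forall (a : seq 'I_n) (i j k l : 'I_n), size a + 2 = m ->
      le_vec (sumvec (a ++ [:: i; j; k; l])) [ffun x => omega J x] ->
      tN [:: tmul (rho (a ++ [:: j; k])) (rho (a ++ [:: i; l]));
             tneg (tmul (rho (a ++ [:: i; k])) (rho (a ++ [:: j; l])));
             tmul (rho (a ++ [:: i; j])) (rho (a ++ [:: k; l]))]).

Definition shifted_matroid n (J : {fset nat ^ n}) : Prop :=
  exists (J' : {fset nat ^ n}) (tau : 'I_n -> int),
    [/\ Mconvex J',
        (forall a, a \in J' -> forall i, a i <= 1) &
        forall v : nat ^ n, v \in J <->
          exists2 a, a \in J' & forall i, Posz (v i) = (Posz (a i) + tau i)%R].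

From Stdlib Require Import Classical.
From HB Require Import structures.
From mathcomp Require Import all_boot all_order all_algebra all_fingroup.
From mathcomp Require Import finmap zify.
Set Implicit Arguments. Unset Strict Implicit. Unset Printing Implicit Defensive.

(* Unless [J] is a translated matroid, some [omega J i] is at least 2 (otherwise
   [J - delta^-] is a 0/1 M-convex set), so some [g] in [Jbar] has [g i >= 2] and [rho]
   is nonzero on a word [a i i] with [Sigma (a i i) = g]; alternation in the two equal
   letters forces [-1 = 1].  Two exchange steps in [Jbar] moving mass away from [i] give
   letters [x, y] with [rho (a x y) <> 0], and the three-term Plücker relation at
   [(a; i, i, x, y)] reads [T - T + S] with [S <> 0]; dividing by [T] yields
   [1 + 1 + S/T] in [N_F].  When [omega J i >= 3], the exchanges can be arranged so that
   [x = i], where the relation reads [T - T + T] with [T <> 0], i.e. [1 + 1 + 1] in [N_F]. *)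

Section TractTheory.
Variable F : tract.
Local Notation "0" := (tzero F).
Local Notation "1" := (tone F).
Local Notation "x * y" := (tmul x y).

Lemma tmulr1 (x : F) : x * 1 = x.
Proof. by rewrite tmulC tmul1. Qed.

Lemma tN_scale (c : F) s : tN s -> tN [seq c * b | b <- s].
Proof. by move=> /(tN_mul [:: c]) /=; rewrite cats0. Qed.

Lemma tN_unscale (c : F) s : c <> 0 -> tN [seq c * b | b <- s] -> tN s.
Proof.
case/tmulV=> c' c'c /(tN_scale c'); rewrite -map_comp.
by under eq_map => b do rewrite /= tmulA c'c tmul1; rewrite map_id.
Qed.

Lemma tnegMr (x y : F) : tneg (x * y) = x * tneg y.
Proof. by rewrite (tneg_uniq (tN_scale x (tN_neg y))). Qed.

Lemma tneg0 : tneg 0 = 0.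
Proof. by apply/esym/tneg_uniq/tN_zero/tN_zero/tN_nil. Qed.

Lemma tN_seq1 (x : F) : tN [:: x] -> x = 0.
Proof. by move=> /tN_zero /tneg_uniq ->; rewrite tneg0. Qed.

Lemma tmul_neq0 (x y : F) : x <> 0 -> y <> 0 -> x * y <> 0.
Proof.
move=> x0 y0 xy0; case: (tmulV x0) => x' x'x.
by apply: y0; rewrite -(tmul1 y) -x'x -tmulA xy0 tmulC tmul0.
Qed.

Lemma tneg1_eq1 (x : F) : x <> 0 -> tneg 1 * x = x -> tneg 1 = 1.
Proof.
case/tmulV=> x' x'x e.
have : x' * (tneg 1 * x) = x' * x by rewrite e.
by rewrite tmulA (tmulC x') -tmulA x'x tmulr1.
Qed.

Hypothesis neg1 : tneg 1 = 1.

Lemma tnegE (x : F) : tneg x = x.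
Proof. by rewrite -(tmulr1 x) tnegMr neg1. Qed.

Lemma tN_11 : tN [:: 1; 1].
Proof. by rewrite -[in X in [:: _; X]]neg1; apply: tN_neg. Qed.

(* The witness is [S / T]; [T = 0] is impossible, as then [S] alone would lie in [N_F]. *)
Lemma near_idempotent_of (T S : F) :
  S <> 0 -> tN [:: T; tneg T; S] -> tract_near_idempotent F.
Proof.
move=> S0; rewrite tnegE => N3; split; first exact: tN_11.
have [T0 | T0] := classic (T = 0).
  by move: N3; rewrite T0 => /tN_zero /tN_zero /tN_seq1.
case: (tmulV T0) => y yT.
exists (y * S); split; last by have /= := tN_scale y N3; rewrite yT.
by apply: tmul_neq0 => // y0; apply: (@tone_neq0 F); rewrite -yT y0 tmul0.
Qed.

Lemma idempotent_of (T : F) : T <> 0 -> tN [:: T; tneg T; T] -> tract_idempotent F.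
Proof.
move=> T0; rewrite tnegE => N3; split; first exact: tN_11.
by apply: (tN_unscale T0); rewrite /= tmulr1.
Qed.

End TractTheory.

Lemma big_seq_selective (I : eqType) (R : Type) (op : R -> R -> R) (idx : R)
    (s : seq I) (f : I -> R) :
  (forall x y, op x y = x \/ op x y = y) ->
  \big[op/idx]_(i <- s) f i = idx \/
  exists2 i, i \in s & \big[op/idx]_(i <- s) f i = f i.
Proof.
move=> opsel; rewrite big_seq.
apply: (big_ind (fun x => x = idx \/ exists2 i, i \in s & x = f i)); first by left.
  by move=> x y Kx Ky; case: (opsel x y) => ->.
by move=> i si; right; exists i.
Qed.

Lemma maxn_sel m k : maxn m k = m \/ maxn m k = k.
Proof. by case: leqP => _; [right | left]. Qed.

Lemma minn_sel m k : minn m k = m \/ minn m k = k.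
Proof. by case: leqP => _; [left | right]. Qed.

Lemma bigmin_le_seq (I : eqType) (s : seq I) (f : I -> nat) idx i :
  i \in s -> \big[minn/idx]_(j <- s) f j <= f i.
Proof.
elim: s => // j s IH; rewrite in_cons big_cons => /predU1P [<- | /IH].
  exact: geq_minl.
by rewrite geq_min => ->; rewrite orbT.
Qed.

Section DeltaBounds.
Variables (n : nat) (J : {fset nat ^ n}).

Lemma dplus_ge a k : a \in J -> a k <= dplus J k.
Proof. by move=> aJ; apply: leq_bigmax_seq. Qed.

Lemma dminus_le a k : a \in J -> dminus J k <= a k.
Proof. exact: bigmin_le_seq. Qed.

Hypothesis J0 : J != fset0.

Lemma dplus_attained k : exists2 a, a \in J & a k = dplus J k.
Proof.
have [a0 a0J] := fset0Pn J J0.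
have [dp0 | [a aJ dpa]] := big_seq_selective 0 J (fun a : nat ^ n => a k) maxn_sel.
  by exists a0 => //; move: (dplus_ge k a0J); rewrite /dplus dp0 leqn0 => /eqP.
by exists a.
Qed.

Lemma dminus_attained k : exists2 a, a \in J & a k = dminus J k.
Proof.
have [dmdp | [a aJ dma]] :=
  big_seq_selective (dplus J k) J (fun a : nat ^ n => a k) minn_sel; last by exists a.
by have [a aJ ak] := dplus_attained k; exists a; rewrite // /dminus dmdp.
Qed.

End DeltaBounds.

Lemma addeps_src n (u : nat ^ n) l i : l != i -> addeps u l i i = u i - 1.
Proof. by move=> li; rewrite ffunE eqxx eq_sym (negbTE li) addn0. Qed.

Lemma addeps_subr n (a d : nat ^ n) i j : (forall k, d k <= a k) ->
  addeps [ffun k => a k - d k] i j = [ffun k => addeps a i j k - d k].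
Proof.
move=> da; apply/ffunP => k; rewrite !ffunE.
by have := da k; case: (k == i); case: (k == j) => /=; lia.
Qed.

Section Translation.
Local Open Scope fset_scope.
Variables (n : nat) (J : {fset nat ^ n}) (d : nat ^ n).
Hypothesis dJ : forall a, a \in J -> forall k, d k <= a k.

Definition translate_down : {fset nat ^ n} := [fset [ffun k => a k - d k] | a : nat ^ n in J].

Lemma Mconvex_translate_down : Mconvex J -> Mconvex translate_down.
Proof.
case=> J0 Jexch; split.
  by have [a aJ] := fset0Pn J J0; apply/fset0Pn; exists [ffun k => a k - d k]; apply: in_imfset.
move=> _ _ /imfsetP [a aJ ->] /imfsetP [b bJ ->] i; rewrite !ffunE => ab.
have [j [ba aijJ bjiJ]] : exists j, [/\ b j < a j, addeps a i j \in J & addeps b j i \in J].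
  by apply: Jexch => //; move: ab; apply: contraTT; rewrite -!leqNgt => /leq_sub2r.
exists j; split.
- by rewrite !ffunE; apply: ltn_sub2r => //; apply: leq_ltn_trans (dJ bJ j) ba.
- by rewrite addeps_subr; [apply: in_imfset | apply: dJ].
- by rewrite addeps_subr; [apply: in_imfset | apply: dJ].
Qed.

Lemma mem_translate_down v :
  (v \in J) <-> exists2 a, a \in translate_down & forall i, Posz (v i) = (Posz (a i) + Posz (d i))%R.
Proof.
split=> [vJ | [_ /imfsetP [a aJ ->] vad]].
  by exists [ffun k => v k - d k]; [apply: in_imfset | move=> i; rewrite ffunE -PoszD subnK ?dJ].
suff -> : v = a by [].
by apply/ffunP => k; have := vad k; rewrite ffunE -PoszD subnK ?dJ //; case.
Qed.

End Translation.

Lemma shifted_matroid_of_omega_le1 n (J : {fset nat ^ n}) :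
  Mconvex J -> (forall i, omega J i <= 1) -> shifted_matroid J.
Proof.
move=> HM om1; pose d := finfun (dminus J).
have dJ a : a \in J -> forall k, d k <= a k by move=> aJ k; rewrite ffunE dminus_le.
exists (translate_down J d), (fun i => Posz (d i)); split.
- exact: Mconvex_translate_down.
- move=> _ /imfsetP [a aJ ->] k; rewrite !ffunE.
  exact: leq_trans (leq_sub2r _ (dplus_ge k aJ)) (om1 k).
- by move=> v; apply: mem_translate_down.
Qed.

Lemma addepsii n (a : nat ^ n) i : addeps a i i = a.
Proof. by apply/ffunP => k; rewrite ffunE addnK. Qed.

Lemma size_sumvec n (s : seq 'I_n) : size s = \sum_(k < n) sumvec s k.
Proof.
elim: s => [|x s IH] /=; first by rewrite big1 // => k _; rewrite ffunE.
rewrite (eq_bigr (fun k => (x == k) + sumvec s k)); last by move=> k _; rewrite !ffunE.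
by rewrite big_split /= -IH (bigD1 x) //= eqxx big1 // => k /negbTE; rewrite eq_sym => ->.
Qed.

Lemma sumvec_surj n (g : nat ^ n) : exists s : seq 'I_n, sumvec s = g.
Proof.
exists (flatten [seq nseq (g k) k | k <- enum 'I_n]); apply/ffunP => x.
rewrite ffunE count_flatten -map_comp sumnE big_map big_enum /= (bigD1 x) //=.
rewrite count_nseq /= eqxx mul1n big1 ?addn0 // => k /negbTE kx.
by rewrite count_nseq /= kx.
Qed.

Lemma sumvec_last2 n (g : nat ^ n) i : 1 < g i -> exists al, sumvec (al ++ [:: i; i]) = g.
Proof.
move=> gi; have [al eal] := sumvec_surj [ffun k => g k - (k == i) * 2].
exists al; apply/ffunP => k; have := congr1 (fun f : nat ^ n => f k) eal.
rewrite !ffunE count_cat /= (eq_sym i) => ->.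
by case: eqVneq => [-> | _] /=; [rewrite mul1n subnK | rewrite mul0n subn0 !addn0].
Qed.

Lemma sumvec_exchange2 n (al : seq 'I_n) g i x y : sumvec (al ++ [:: i; i]) = g ->
  sumvec (al ++ [:: x; y]) = addeps (addeps g x i) y i.
Proof.
move=> <-; apply/ffunP => k; rewrite !ffunE !count_cat /= (eq_sym x) (eq_sym y) (eq_sym i).
by case: (k == i); case: (k == x); case: (k == y) => /=; lia.
Qed.

Section ReducedSet.
Variables (n r : nat) (J : {fset nat ^ n}).

Lemma Jbar_le g k : in_Jbar J g -> g k <= omega J k.
Proof. by move=> /(dplus_ge k); rewrite ffunE /omega; lia. Qed.

Lemma sumvec_iixy_le_omega al i x y : in_Jbar J (sumvec (al ++ [:: x; y])) ->
  sumvec (al ++ [:: x; y]) i + 2 <= omega J i ->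
  le_vec (sumvec (al ++ [:: i; i; x; y])) [ffun k => omega J k].
Proof.
move=> /Jbar_le wJ wi; apply/forallP => k; have := wJ k; move: wi.
rewrite !ffunE !count_cat /=.
by case: (eqVneq i k) => [<- | _] /=; lia.
Qed.

Hypothesis HD : forall a, a \in J -> in_Delta r a.

Lemma Jbar_sum g : in_Jbar J g -> \sum_(i < n) g i = rbar r J.
Proof.
move=> /HD /eqP; rewrite /rbar (eq_bigr (fun i => g i + dminus J i)) => [|i _]; last by rewrite ffunE.
by rewrite big_split /= => <-; rewrite addnK.
Qed.

Lemma Jbar_word g i : in_Jbar J g -> 1 < g i ->
  exists2 al, size al + 2 = rbar r J & sumvec (al ++ [:: i; i]) = g.
Proof.
move=> gJ gi; have [al alg] := sumvec_last2 gi; exists al => //.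
by rewrite -(Jbar_sum gJ) -alg -size_sumvec size_cat.
Qed.

Hypothesis HM : Mconvex J.

Lemma Jbar_attains_omega k : exists2 g, in_Jbar J g & g k = omega J k.
Proof.
have [a aJ ak] := dplus_attained HM.1 k.
exists [ffun x => a x - dminus J x]; last by rewrite ffunE ak.
rewrite /in_Jbar (_ : [ffun x => _] = a) //.
by apply/ffunP => x; rewrite !ffunE subnK // dminus_le.
Qed.

Lemma Jbar_exchange u i : in_Jbar J u -> 0 < u i ->
  exists2 l, l != i & in_Jbar J (addeps u l i).
Proof.
(* Exchange [u + delta^-] with an element of [J] minimising the [i]-th coordinate. *)
move=> uJ ui; have [b bJ bi] := dminus_attained HM.1 i.
have [|l [ul _ ulJ]] := HM.2 b _ bJ uJ i; first by rewrite ffunE bi -addn1 addnC leq_add2r.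
exists l.
  by apply: contraTneq ul => ->; rewrite ffunE bi -leqNgt leq_addl.
rewrite /in_Jbar (_ : [ffun k => _] = addeps [ffun k => u k + dminus J k] l i) //.
apply/ffunP => k; rewrite !ffunE.
case: (eqVneq k i) => [-> | _]; case: (_ == l); rewrite /= ?addn0 ?subn0 ?addnK //.
  exact: addnBAC.
exact: addnAC.
Qed.

End ReducedSet.

Section WeakRepresentation.
Variables (F : tract) (n r : nat) (J : {fset nat ^ n}) (rho : seq 'I_n -> F).
Hypotheses (HD : forall a, a \in J -> in_Delta r a) (HM : Mconvex J).
Hypothesis Hrho : weak_rep r J rho.
Local Notation m := (rbar r J).

Lemma rho_neq0 w : size w = m -> rho w <> tzero F <-> in_Jbar J (sumvec w).
Proof. by move=> /eqP sw; apply: Hrho.1 (Tuple sw). Qed.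

Lemma rho_swap al x y : size al + 2 = m ->
  rho (al ++ [:: y; x]) = tmul (tneg (tone F)) (rho (al ++ [:: x; y])).
Proof.
move=> sal; have sxy : size (al ++ [:: x; y]) == m by rewrite size_cat -sal.
have syx : size (al ++ [:: y; x]) == m by rewrite size_cat -sal.
have p_lt : size al < m by rewrite -sal addn2.
have q_lt : (size al).+1 < m by rewrite -sal addn2.
pose p := Ordinal p_lt; pose q := Ordinal q_lt.
have := Hrho.2.1 (Tuple sxy) (tperm p q).
rewrite odd_tperm (_ : p != q) /tsign /=; last by rewrite -val_eqE /= neq_ltn ltnSn.
move <-; congr rho.
rewrite -[LHS]/(tval (Tuple syx)) -(map_tnth_enum (Tuple syx)); apply: eq_map => k.
rewrite !(tnth_nth x) /=; case: tpermP => [-> | -> | kp kq] /=.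
1, 2: by rewrite !nth_cat ltnn subnn ltnNge leqnSn /= subSnn.
rewrite !nth_cat; case: ltnP => // alk; exfalso.
have : val k < size al + 2 by rewrite sal ltn_ord.
by move/eqP: kp; move/eqP: kq; rewrite -!val_eqE /=; lia.
Qed.

Lemma rho_plucker_iixy al i x y : size al + 2 = m ->
  in_Jbar J (sumvec (al ++ [:: x; y])) -> sumvec (al ++ [:: x; y]) i + 2 <= omega J i ->
  tN [:: tmul (rho (al ++ [:: i; x])) (rho (al ++ [:: i; y]));
         tneg (tmul (rho (al ++ [:: i; x])) (rho (al ++ [:: i; y])));
         tmul (rho (al ++ [:: i; i])) (rho (al ++ [:: x; y]))].
Proof. by move=> sal wJ wi; apply: Hrho.2.2 sal (sumvec_iixy_le_omega wJ wi). Qed.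

Lemma tneg1_of_omega i : 1 < omega J i -> tneg (tone F) = tone F.
Proof.
move=> oi; have [g gJ gi] := Jbar_attains_omega HM i.
have gi2 : 1 < g i by rewrite gi.
have [al sal alg] := Jbar_word HD gJ gi2.
apply: (@tneg1_eq1 _ (rho (al ++ [:: i; i]))); last by rewrite -rho_swap.
by apply/rho_neq0; rewrite ?size_cat ?alg.
Qed.

Lemma near_idempotent_of_omega i : 1 < omega J i -> tract_near_idempotent F.
Proof.
move=> oi; have [g gJ gi] := Jbar_attains_omega HM i.
have gi2 : 1 < g i by rewrite gi.
have [al sal alg] := Jbar_word HD gJ gi2.
have [j ji g1J] := Jbar_exchange HM gJ (ltnW gi2).
have g1i : 0 < addeps g j i i by rewrite addeps_src // subn_gt0.
have [j' j'i g2J] := Jbar_exchange HM g1J g1i.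
have w := sumvec_exchange2 j j' alg.
apply: (near_idempotent_of (tneg1_of_omega oi) _
  (rho_plucker_iixy (i := i) (x := j) (y := j') sal _ _)).
- apply: tmul_neq0; apply/rho_neq0; rewrite ?size_cat ?alg ?w //.
- by rewrite w.
- rewrite w !addeps_src //; have := Jbar_le i gJ; lia.
Qed.

Lemma idempotent_of_omega i : 2 < omega J i -> tract_idempotent F.
Proof.
move=> oi; have [g gJ gi] := Jbar_attains_omega HM i.
have gi3 : 2 < g i by rewrite gi.
have [j ji vJ] := Jbar_exchange HM gJ (ltnW (ltnW gi3)).
have vi : 1 < addeps g j i i by rewrite addeps_src //; lia.
have [al sal alv] := Jbar_word HD vJ vi.
have [l li wJ] := Jbar_exchange HM vJ (ltnW vi).
have w : sumvec (al ++ [:: i; l]) = addeps (addeps g j i) l i.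
  by rewrite (sumvec_exchange2 i l alv) addepsii.
apply: (idempotent_of (tneg1_of_omega (ltnW oi)) _
  (rho_plucker_iixy (i := i) (x := i) (y := l) sal _ _)).
- apply: tmul_neq0; apply/rho_neq0; rewrite ?size_cat ?alv ?w //.
- by rewrite w.
- rewrite w !addeps_src //; have := Jbar_le i gJ; lia.
Qed.

End WeakRepresentation.

Theorem propositionC (F : tract) (n r : nat) (J : {fset nat ^ n}) :
  (forall a, a \in J -> in_Delta r a) ->
  Mconvex J ->
  ~ shifted_matroid J ->
  (exists rho : seq 'I_n -> F, weak_rep r J rho) ->
  tract_near_idempotent F /\ ((exists i : 'I_n, 3 <= omega J i) -> tract_idempotent F).
Proof.
move=> HD HM not_shifted [rho Hrho].
have [i oi] : exists i, 1 < omega J i.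
  apply/existsP; apply: contraT => /existsPn om1; case: not_shifted.
  by apply: shifted_matroid_of_omega_le1 => // k; rewrite leqNgt om1.
split; first exact: (near_idempotent_of_omega HD HM Hrho oi).
by case=> k ok; apply: (idempotent_of_omega HD HM Hrho ok).
Qed.
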